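(* $E_{range}$ and $E_0$ are learn-incomparable: there is a family of structures that is $E_0$-learnable but not $E_{range}$-learnable, and there is a family of structures that is $E_{range}$-learnable but not $E_0$-learnable (for instance the family of graphs $\{\mathsf{R}_n\oplus\mathsf{I}:n\geq 2\}\cup\{\mathsf{R}\oplus\mathsf{I}\}$).
   Context: All structures are countable, have domain $\mathbb{N}$, are in a finite relational signature, and are identified with their atomic diagrams (elements of $2^{\mathbb{N}}$). A family of structures is a countable set of pairwise nonisomorphic such structures. $\mathrm{LD}(\mathfrak{K})\subseteq 2^{\mathbb{N}}$ is the set of structures with domain $\mathbb{N}$ isomorphic to a member of $\mathfrak{K}$ (subspace topology). For an equivalence relation $E$ on a space $X$, $\mathfrak{K}$ is $E$-learnable if there is a continuous $\Gamma:\mathrm{LD}(\mathfrak{K})\to X$ with $\mathcal{S}\cong\mathcal{S}'\iff\Gamma(\mathcal{S})\,E\,\Gamma(\mathcal{S}')$ for all $\mathcal{S},\mathcal{S}'\in\mathrm{LD}(\mathfrak{K})$. On Baire space $\mathbb{N}^{\mathbb{N}}$: $p\,E_0\,q\iff\exists m\,\forall n\ge m\ p(n)=q(n)$; $p\,E_{range}\,q\iff\{p(m):m\}=\{q(m):m\}$. Graphs are undirected without self-loops. $\mathsf{R}$ is the graph on $\mathbb{N}$ with edges $\{i,i+1\}$; $\mathsf{I}$ is the graph on $\mathbb{N}$ with no edges; for $n\ge2$, $\mathsf{R}_n$ is the graph on $\{0,\dots,n-1\}$ with edges $\{i,i+1\}$, $i<n-1$; $G_0\oplus G_1$ is the disjoint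 union of graphs (re-indexed to have domain $\mathbb{N}$). *)

From mathcomp Require Import all_boot.
Set Implicit Arguments. Unset Strict Implicit. Unset Printing Implicit Defensive.

(* A finite relational signature: the list of arities of its relation symbols. *)
Definition signature := seq nat.

(* This is exactly the information contained in the atomic diagram. *)
Definition structure (sig : signature) :=
  forall i : 'I_(size sig), (nth 0 sig i).-tuple nat -> bool.

Definition iso (sig : signature) (A B : structure sig) : Prop :=
  exists f g : nat -> nat, cancel f g /\ cancel g f /\
    forall (i : 'I_(size sig)) (t : (nth 0 sig i).-tuple nat),
      A i t = B i (map_tuple f t).

Definition is_family (sig : signature) (K : structure sig -> Prop) : Prop :=
  (exists e : nat -> structure sig, forall A, K A -> exists n, e n = A) /\
  (forall A B, K A -> K B -> iso A B -> A = B).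

Definition LD (sig : signature) (K : structure sig -> Prop) (S : structure sig) : Prop :=
  exists A, K A /\ iso S A.

Definition agree_below (sig : signature) (m : nat) (S S' : structure sig) : Prop :=
  forall (i : 'I_(size sig)) (t : (nth 0 sig i).-tuple nat),
    all (fun x => x < m) t -> S i t = S' i t.

(* Continuity of Gamma : LD(K) -> Baire space, LD(K) carrying the subspace
   topology of Cantor space (atomic diagrams): every finite prefix of the
   output is determined by a finite part of the atomic diagram of the input. *)
Definition continuous_on_LD (sig : signature) (K : structure sig -> Prop)
  (Gamma : structure sig -> nat -> nat) : Prop :=
  forall S, LD K S -> forall n, exists m, forall S', LD K S' ->
    agree_below m S S' -> forall k, k < n -> Gamma S k = Gamma S' k.

Definition learnable (E : (nat -> nat) -> (nat -> nat) -> Prop)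
  (sig : signature) (K : structure sig -> Prop) : Prop :=
  exists Gamma : structure sig -> nat -> nat,
    continuous_on_LD K Gamma /\
    forall S S', LD K S -> LD K S' -> (iso S S' <-> E (Gamma S) (Gamma S')).

Definition E0 (p q : nat -> nat) : Prop :=
  exists m, forall n, m <= n -> p n = q n.

Definition Erange (p q : nat -> nat) : Prop :=
  forall x, (exists m, p m = x) <-> (exists m, q m = x).

From mathcomp Require Import all_boot zify.
From Stdlib Require Import Classical ClassicalEpsilon.

(* The first family has two structures, each with two binary relations: a
   perfect matching of nat and a matching leaving 0 unmatched, in either order.
   A learner that watches for an unmatched point of the first relation tells
   them apart in the limit; but each of them is a limit of isomorphic copies of
   the other, so a continuous map respecting isomorphism must give both the
   same range of values.
   The second family consists of the unary structures with exactly n marked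
   points, together with one with infinitely many marked and unmarked points.
   Counting the marked points below k has as range {0, ..., n} or all of nat.
   Against E0 we diagonalize: a copy of the infinite structure is assembled
   from finite patterns, each extended so that the learner disagrees, beyond
   that pattern, with its value on the infinite structure. *)

(** * Isomorphism and learnability *)

Lemma map_tuple_comp n (t : n.-tuple nat) (f g : nat -> nat) :
  map_tuple g (map_tuple f t) = map_tuple (g \o f) t.
Proof. by apply: val_inj => /=; rewrite map_comp. Qed.

Lemma iso_refl {sig} (A : structure sig) : iso A A.
Proof.
exists id, id; do 2 split=> //; move=> i t.
by congr (A i _); apply: val_inj => /=; rewrite map_id.
Qed.

Lemma iso_sym {sig} {A B : structure sig} : iso A B -> iso B A.
Proof.
case=> f [g [fK [gK AB]]]; exists g, f; do 2 split=> //; move=> i t.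
rewrite AB map_tuple_comp; congr (B i _); apply: val_inj => /=.
by rewrite (@eq_map _ _ _ id) ?map_id // => x /=; rewrite gK.
Qed.

Lemma iso_trans {sig} {A B C : structure sig} : iso A B -> iso B C -> iso A C.
Proof.
case=> f1 [g1 [f1K [g1K AB]]] [f2 [g2 [f2K [g2K BC]]]].
exists (f2 \o f1), (g1 \o g2); split; first exact: can_comp.
split; first exact: can_comp.
by move=> i t; rewrite AB BC map_tuple_comp.
Qed.

Definition pullback {sig} (h : nat -> nat) (S : structure sig) : structure sig :=
  fun i t => S i (map_tuple h t).

Lemma iso_pullback {sig} (h h' : nat -> nat) (S : structure sig) :
  cancel h h' -> cancel h' h -> iso (pullback h S) S.
Proof. by move=> hK h'K; exists h, h'. Qed.

Lemma LD_iso {sig} {K : structure sig -> Prop} {S A} : LD K A -> iso S A -> LD K S.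
Proof. by case=> B [KB AB] SA; exists B; split=> //; apply: iso_trans AB. Qed.

Lemma agree_below_trans {sig} {m} {A B C : structure sig} :
  agree_below m A B -> agree_below m B C -> agree_below m A C.
Proof. by move=> AB BC i t t_lt; rewrite AB // BC. Qed.

Lemma agree_below_le {sig} {m m'} {A B : structure sig} :
  m' <= m -> agree_below m A B -> agree_below m' A B.
Proof. by move=> le_m'm AB i t /allP t_lt; apply: AB; apply/allP => x /t_lt; lia. Qed.

Lemma learnable_of_iso_invariant {sig} {E : (nat -> nat) -> (nat -> nat) -> Prop}
    {K : structure sig -> Prop} {Gamma : structure sig -> nat -> nat} :
  (forall p q, E p q -> E q p) -> (forall p q r, E p q -> E q r -> E p r) ->
  continuous_on_LD K Gamma ->
  (forall S A, K A -> iso S A -> E (Gamma S) (Gamma A)) ->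
  (forall A B, K A -> K B -> E (Gamma A) (Gamma B) -> A = B) ->
  learnable E K.
Proof.
move=> Esym Etrans Gcont Ginv Gsep; exists Gamma; split=> //.
move=> S S' [A [KA SA]] [A' [KA' SA']].
split=> [SS' | ESS'].
  have S'A := iso_trans (iso_sym SS') SA.
  exact: Etrans (Ginv _ _ KA SA) (Esym _ _ (Ginv _ _ KA S'A)).
have AA' : A = A'.
  apply: Gsep => //; apply: (Etrans _ _ _ _ (Ginv _ _ KA' SA')).
  exact: (Etrans _ _ _ (Esym _ _ (Ginv _ _ KA SA)) ESS').
by rewrite -AA' in SA'; apply: iso_trans SA (iso_sym SA').
Qed.

Definition iso_approx {sig} (A B : structure sig) :=
  forall N, exists2 B', iso B' B & agree_below N A B'.

Lemma range_incl_of_iso_approx {sig} {K : structure sig -> Prop}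
    {Gamma : structure sig -> nat -> nat} {A B} :
  continuous_on_LD K Gamma ->
  (forall S S', LD K S -> LD K S' -> iso S S' -> Erange (Gamma S) (Gamma S')) ->
  LD K A -> LD K B -> iso_approx A B ->
  forall m, exists m', Gamma B m' = Gamma A m.
Proof.
move=> Gcont Ginv KA KB AB m; have [N GN] := Gcont A KA m.+1.
have [B' B'B AB'] := AB N; have KB' := LD_iso KB B'B.
rewrite (GN B' KB' AB' m (ltnSn m)).
by apply: (Ginv _ _ KB' KB B'B _).1; exists m.
Qed.

Lemma not_Erange_learnable_of_iso_approx {sig} {K : structure sig -> Prop} {A B} :
  LD K A -> LD K B -> ~ iso A B -> iso_approx A B -> iso_approx B A ->
  ~ learnable Erange K.
Proof.
move=> KA KB nAB AB BA [Gamma [Gcont Glearn]].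
have Ginv S S' : LD K S -> LD K S' -> iso S S' -> Erange (Gamma S) (Gamma S').
  by move=> KS KS'; apply: (Glearn S S' KS KS').1.
apply: nAB; apply/(Glearn _ _ KA KB) => x; split=> -[m <-].
  exact: range_incl_of_iso_approx Gcont Ginv KA KB AB m.
exact: range_incl_of_iso_approx Gcont Ginv KB KA BA m.
Qed.

Lemma E0_sym p q : E0 p q -> E0 q p.
Proof. by case=> m pq; exists m => n /pq. Qed.

Lemma E0_trans p q r : E0 p q -> E0 q r -> E0 p r.
Proof.
case=> m pq [m' qr]; exists (maxn m m') => n le_n.
by rewrite pq ?qr //; lia.
Qed.

Lemma not_E0_often p q : ~ E0 p q -> forall m, exists2 n, m <= n & p n <> q n.
Proof.
move=> npq m; apply: NNPP => nfar; apply: npq; exists m => n le_mn.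
by apply: NNPP => pqn; apply: nfar; exists n.
Qed.

Lemma Erange_sym p q : Erange p q -> Erange q p.
Proof. by move=> pq x; split; apply pq. Qed.

Lemma Erange_trans p q r : Erange p q -> Erange q r -> Erange p r.
Proof. by move=> pq qr x; split=> [/pq/qr | /qr/pq]. Qed.

Definition converges_to (p : nat -> nat) c := exists N, forall k, N <= k -> p k = c.

Lemma converges_to_E0 {p q c} : converges_to p c -> converges_to q c -> E0 p q.
Proof. by case=> N pc [N' qc]; exists (maxn N N') => k le_k; rewrite pc ?qc //; lia. Qed.

Lemma E0_converges_to_eq {p q c d} :
  converges_to p c -> converges_to q d -> E0 p q -> c = d.
Proof.
case=> N pc [N' qd] [m pq]; have k_ge : N <= maxn m (maxn N N') by lia.
by rewrite -(pc _ k_ge) pq ?qd //; lia.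
Qed.

(** * A family that is E0-learnable but not Erange-learnable *)

Definition sig1 : signature := [:: 2; 2].

Lemma arity_sig1 (i : 'I_(size sig1)) : nth 0 sig1 i = 2.
Proof. by case: i => [[|[|]]]. Qed.

Lemma size_sig1_tuple (i : 'I_(size sig1)) (t : (nth 0 sig1 i).-tuple nat) : size t = 2.
Proof. by rewrite size_tuple arity_sig1. Qed.

(* [pairing] matches 2k with 2k+1; [shifted_pairing] matches 2k+1 with 2k+2
   and leaves 0 unmatched. *)
Definition pairing x y := (x != y) && (x %/ 2 == y %/ 2).
Definition shifted_pairing x y := (0 < x) && (0 < y) && pairing x.-1 y.-1.

Lemma pairingSS x y : pairing x.+1 y.+1 = shifted_pairing x y.
Proof.
rewrite /shifted_pairing /pairing; apply/idP/idP.
  case/andP => /eqP ne_xy /eqP eq_half.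
  by apply/andP; split; [apply/andP; split | apply/andP; split; apply/eqP]; lia.
case/andP => /andP [x_gt0 y_gt0] /andP [/eqP ne_xy /eqP eq_half].
by apply/andP; split; apply/eqP; lia.
Qed.

Lemma shifted_pairingSS x y : shifted_pairing x.+1 y.+1 = pairing x y.
Proof. by []. Qed.

Definition partner x := if odd x then x.-1 else x.+1.

Lemma pairing_partner x : pairing x (partner x).
Proof.
by rewrite /pairing /partner; case: ifP => odd_x; apply/andP; split; apply/eqP; lia.
Qed.

Definition binary2 (R0 R1 : nat -> nat -> bool) : structure sig1 :=
  fun i t => (if i == 0 :> nat then R0 else R1) (nth 0 t 0) (nth 0 t 1).

Definition A0 := binary2 shifted_pairing pairing.
Definition B0 := binary2 pairing shifted_pairing.

Lemma binary2_map R0 R1 h (i : 'I_(size sig1)) (t : (nth 0 sig1 i).-tuple nat) :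
  binary2 R0 R1 i (map_tuple h t) =
  (if i == 0 :> nat then R0 else R1) (h (nth 0 t 0)) (h (nth 0 t 1)).
Proof. by rewrite /binary2 /= !(nth_map 0) // size_sig1_tuple. Qed.

Lemma all_sig1_tuple m (i : 'I_(size sig1)) (t : (nth 0 sig1 i).-tuple nat) :
  all (fun x => x < m) t -> nth 0 t 0 < m /\ nth 0 t 1 < m.
Proof. by move/allP => t_lt; split; apply/t_lt/mem_nth; rewrite size_sig1_tuple. Qed.

Definition rotate N x := if x < N then x.+1 else if x == N then 0 else x.
Definition unrotate N y := if y == 0 then N else if y <= N then y.-1 else y.

Lemma rotateK N : cancel (rotate N) (unrotate N).
Proof.
move=> x; rewrite /rotate /unrotate.
case: (ltngtP x N) => [lt_xN | gt_xN | ->]; last by rewrite eqxx.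
  by rewrite /= lt_xN.
by rewrite ifN ?ifN //; [rewrite -ltnNge | apply/eqP]; lia.
Qed.

Lemma unrotateK N : cancel (unrotate N) (rotate N).
Proof.
move=> y; rewrite /rotate /unrotate.
case: (y =P 0) => [-> | nz_y]; first by rewrite ltnn eqxx.
case: (leqP y N) => [le_yN | lt_Ny]; first by case: y nz_y le_yN => //= y _ ->.
by rewrite ifN ?ifN //; [apply/eqP | rewrite -leqNgt]; lia.
Qed.

(* Pulling back along [rotate N] shifts both relations by one step below N;
   a shift exchanges [pairing] and [shifted_pairing]. *)
Lemma agree_below_rotate N R0 R1 :
  agree_below N (binary2 (fun x y => R0 x.+1 y.+1) (fun x y => R1 x.+1 y.+1))
    (pullback (rotate N) (binary2 R0 R1)).
Proof.
move=> i t /all_sig1_tuple [t0_lt t1_lt].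
rewrite /pullback binary2_map /rotate t0_lt t1_lt /binary2.
by case: (nat_of_ord i == 0).
Qed.

Lemma iso_approx_binary2 {R0 R1 R0' R1'} :
  (forall x y, R0 x.+1 y.+1 = R0' x y) -> (forall x y, R1 x.+1 y.+1 = R1' x y) ->
  iso_approx (binary2 R0' R1') (binary2 R0 R1).
Proof.
move=> R0E R1E N; exists (pullback (rotate N) (binary2 R0 R1)).
  exact: iso_pullback (rotateK N) (unrotateK N).
apply: agree_below_trans (agree_below_rotate N R0 R1) => i t _.
by rewrite /binary2; case: ifP => _ /=; rewrite ?R0E ?R1E.
Qed.

Lemma A0_approx_B0 : iso_approx A0 B0.
Proof. exact: iso_approx_binary2 pairingSS shifted_pairingSS. Qed.

Lemma B0_approx_A0 : iso_approx B0 A0.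
Proof. exact: iso_approx_binary2 shifted_pairingSS pairingSS. Qed.

Definition rel0 (S : structure sig1) x y := S (@Ordinal 2 0 isT) [tuple x; y].
Definition rel1 (S : structure sig1) x y := S (@Ordinal 2 1 isT) [tuple x; y].

Lemma iso_binary2 S R0 R1 : iso S (binary2 R0 R1) ->
  exists2 f : nat -> nat, bijective f &
    forall x y, rel0 S x y = R0 (f x) (f y) /\ rel1 S x y = R1 (f x) (f y).
Proof.
case=> f [g [fK [gK Sf]]]; exists f; first by exists g.
by move=> x y; rewrite /rel0 /rel1 !Sf.
Qed.

Lemma iso_A0_props {S} : iso S A0 ->
  (exists w, forall y, ~~ rel0 S w y) /\ (forall x, exists y, rel1 S x y).
Proof.
case/iso_binary2 => f [g fK gK] Sf; split.
  by exists (g 0) => y; rewrite (Sf _ _).1 gK.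
by move=> x; exists (g (partner (f x))); rewrite (Sf _ _).2 gK pairing_partner.
Qed.

Lemma iso_B0_props {S} : iso S B0 ->
  (exists w, forall y, ~~ rel1 S w y) /\ (forall x, exists y, rel0 S x y).
Proof.
case/iso_binary2 => f [g fK gK] Sf; split.
  by exists (g 0) => y; rewrite (Sf _ _).2 gK.
by move=> x; exists (g (partner (f x))); rewrite (Sf _ _).1 gK pairing_partner.
Qed.

Lemma iso_A0_B0 {S} : iso S A0 -> iso S B0 -> False.
Proof.
move=> /iso_A0_props [[w w_unmatched] _] /iso_B0_props [_ /(_ w) [y]].
by rewrite (negbTE (w_unmatched y)).
Qed.

Definition partnered (R : nat -> nat -> bool) k x := has (R x) (iota 0 k).

Lemma eventually_partnered {R : nat -> nat -> bool} : (forall x, exists y, R x y) ->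
  forall w, exists N, forall k, N <= k -> all (partnered R k) (iota 0 w.+1).
Proof.
move=> R_total; elim=> [|w [N IH]].
  have [y Ry] := R_total 0; exists y.+1 => k le_k /=; rewrite andbT.
  by apply/hasP; exists y; rewrite ?mem_iota //; lia.
have [y Ry] := R_total w.+1; exists (maxn N y.+1) => k le_k.
rewrite -addn1 iotaD all_cat IH /=; last by lia.
by rewrite andbT; apply/hasP; exists y; rewrite ?mem_iota //; lia.
Qed.

(* In a copy of B0 a candidate x unmatched in the first relation is matched
   eventually, unless x lies beyond the point unmatched in the second one. *)
Definition A0_guess (S : structure sig1) k : nat :=
  has (fun x => ~~ partnered (rel0 S) k x && all (partnered (rel1 S) k) (iota 0 x.+1))
    (iota 0 k).

Lemma A0_guess_A0 {S} : iso S A0 -> converges_to (A0_guess S) 1.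
Proof.
case/iso_A0_props => [[w w_unmatched] rel1_total].
have [N HN] := eventually_partnered rel1_total w.
exists (maxn N w.+1) => k le_k; apply/eqP; rewrite eqb1.
apply/hasP; exists w; first by rewrite mem_iota; lia.
by rewrite HN; [rewrite andbT; apply/hasPn | lia].
Qed.

Lemma A0_guess_B0 {S} : iso S B0 -> converges_to (A0_guess S) 0.
Proof.
case/iso_B0_props => [[w w_unmatched] rel0_total].
have [N HN] := eventually_partnered rel0_total w.
exists N => k le_k; apply/eqP; rewrite eqb0; apply/hasPn => x _.
rewrite negb_and; case: (leqP x w) => [le_xw | lt_wx].
  by rewrite negbK (allP (HN k le_k)) // mem_iota; lia.
by apply/orP; right; apply/allPn; exists w; [rewrite mem_iota; lia | apply/hasPn].
Qed.

Lemma continuous_A0_guess K : continuous_on_LD K A0_guess.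
Proof.
move=> S _ n; exists n => S' _ SS' k lt_kn; congr nat_of_bool.
have rel_eq x y : x < n -> y < n -> rel0 S x y = rel0 S' x y /\ rel1 S x y = rel1 S' x y.
  by move=> x_lt y_lt; split; apply: SS'; rewrite /= x_lt y_lt.
apply: eq_in_has => x; rewrite mem_iota => x_lt; congr (~~ _ && _).
  by apply: eq_in_has => y; rewrite mem_iota => y_lt; case: (rel_eq x y); lia.
apply: eq_in_all => z; rewrite mem_iota => z_lt.
by apply: eq_in_has => y; rewrite mem_iota => y_lt; case: (rel_eq z y); lia.
Qed.

Definition K1 (A : structure sig1) := A = A0 \/ A = B0.

Lemma K1_family : is_family K1.
Proof.
split.
  by exists (fun n => if n == 0 then A0 else B0) => A [->|->]; [exists 0 | exists 1].
move=> A B [->|->] [->|->] // AB; exfalso.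
  exact: iso_A0_B0 (iso_refl _) AB.
exact: iso_A0_B0 AB (iso_refl _).
Qed.

Lemma K1_E0_learnable : learnable E0 K1.
Proof.
apply: (learnable_of_iso_invariant E0_sym E0_trans (continuous_A0_guess K1)).
  move=> S A [->|->] SA.
    exact: converges_to_E0 (A0_guess_A0 SA) (A0_guess_A0 (iso_refl _)).
  exact: converges_to_E0 (A0_guess_B0 SA) (A0_guess_B0 (iso_refl _)).
have A0_lim := A0_guess_A0 (iso_refl A0); have B0_lim := A0_guess_B0 (iso_refl B0).
move=> A B [->|->] [->|->] // AB; exfalso.
  by have := E0_converges_to_eq A0_lim B0_lim AB.
by have := E0_converges_to_eq B0_lim A0_lim AB.
Qed.

Lemma K1_not_Erange_learnable : ~ learnable Erange K1.
Proof.
have KA0 : LD K1 A0 by exists A0; split; [left | exact: iso_refl].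
have KB0 : LD K1 B0 by exists B0; split; [right | exact: iso_refl].
apply: (not_Erange_learnable_of_iso_approx KA0 KB0 _ A0_approx_B0 B0_approx_A0).
by move/iso_A0_B0; apply; apply: iso_refl.
Qed.

(** * A family that is Erange-learnable but not E0-learnable *)

Definition count_below (R : nat -> bool) k := count R (iota 0 k).

Definition at_least (R : nat -> bool) j := exists k, j <= count_below R k.

Lemma count_belowS (R : nat -> bool) k :
  count_below R k.+1 = count_below R k + R k.
Proof. by rewrite /count_below -addn1 iotaD count_cat /= addn0. Qed.

Lemma count_below_mono (R : nat -> bool) {k k'} :
  k <= k' -> count_below R k <= count_below R k'.
Proof.
by move=> le_kk'; rewrite /count_below -(subnKC le_kk') iotaD count_cat leq_addr.
Qed.

Lemma count_below_lt {R : nat -> bool} {x x'} :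
  R x -> x < x' -> count_below R x < count_below R x'.
Proof.
by move=> Rx lt_xx'; have := count_below_mono R lt_xx'; rewrite count_belowS Rx; lia.
Qed.

Lemma count_below_inj {R : nat -> bool} {x x'} :
  R x -> R x' -> count_below R x = count_below R x' -> x = x'.
Proof.
move=> Rx Rx' eq_count; case: (ltngtP x x') => // [lt_xx' | lt_x'x].
  by have := count_below_lt Rx lt_xx'; lia.
by have := count_below_lt Rx' lt_x'x; lia.
Qed.

Lemma range_count_below (R : nat -> bool) j :
  (exists m, count_below R m = j) <-> at_least R j.
Proof.
split=> [[m <-] | [k]]; first by exists m.
elim: k j => [|k IH] j; first by rewrite leqn0 => /eqP ->; exists 0.
rewrite count_belowS; case: (leqP j (count_below R k)) => [/IH // | lt_j le_j].
by exists k.+1; rewrite count_belowS; lia.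
Qed.

Lemma at_least_rank {R : nat -> bool} {x} : R x -> at_least R (count_below R x).+1.
Proof. by move=> Rx; exists x.+1; rewrite count_belowS Rx addn1. Qed.

Lemma exists_rank (R : nat -> bool) j :
  at_least R j.+1 -> exists x, R x /\ count_below R x = j.
Proof.
case=> k; elim: k => [|k IH]; first by rewrite /count_below.
rewrite count_belowS; case: (leqP j.+1 (count_below R k)) => [/IH // | lt_j le_j].
by exists k; case: (R k) le_j => /=; lia.
Qed.

Lemma at_least_bounded (R : nat -> bool) K j :
  (forall x, R x -> x < K) -> at_least R j <-> j <= count_below R K.
Proof.
move=> R_lt; split=> [[k le_j] | le_j]; last by exists K.
apply: leq_trans le_j _; apply: leq_trans (count_below_mono R (leq_maxl k K)) _.
rewrite /count_below -(subnKC (leq_maxr k K)) iotaD count_cat.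
rewrite -[X in _ <= X]addn0 leq_add2l leqn0 eqn0Ngt -has_count; apply/hasPn => x.
by rewrite mem_iota => /andP [le_Kx _]; apply/negP => /R_lt; lia.
Qed.

Lemma at_least_infinite (R : nat -> bool) :
  (forall N, exists2 x, N <= x & R x) -> forall j, at_least R j.
Proof.
move=> R_inf; elim=> [|j [k le_j]]; first by exists 0.
have [x le_kx Rx] := R_inf k; exists x.+1; rewrite count_belowS Rx.
by have := count_below_mono R le_kx; lia.
Qed.

Lemma at_least_inj (R P : nat -> bool) (f : nat -> nat) :
  injective f -> (forall x, R x = P (f x)) ->
  forall j, at_least R j -> at_least P j.
Proof.
move=> f_inj RP j [k le_j]; set s := map f (filter R (iota 0 k)).
exists (\max_(y <- s) y).+1; apply: leq_trans le_j _.
have -> : count_below R k = size s by rewrite size_map size_filter.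
rewrite /count_below -size_filter; apply: uniq_leq_size.
  by rewrite map_inj_uniq ?filter_uniq ?iota_uniq.
move=> y s_y; move: (s_y) => /mapP [x]; rewrite mem_filter => /andP [Rx _] fx.
by rewrite mem_filter mem_iota fx -RP Rx ltnS /= -fx (leq_bigmax_seq y).
Qed.

Definition elem_of_rank (R : nat -> bool) j :=
  epsilon (inhabits 0) (fun y => R y /\ count_below R y = j).

Lemma elem_of_rankP {R : nat -> bool} {j} : at_least R j.+1 ->
  R (elem_of_rank R j) /\ count_below R (elem_of_rank R j) = j.
Proof. by move/exists_rank; apply: epsilon_spec. Qed.

Definition same_size (P Q : nat -> bool) := forall j, at_least P j <-> at_least Q j.

Lemma same_size_sym {P Q} : same_size P Q -> same_size Q P.
Proof. by move=> PQ j; split=> /PQ. Qed.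

Definition rank_match (P Q : nat -> bool) x :=
  if P x then elem_of_rank Q (count_below P x)
  else elem_of_rank (fun y => ~~ Q y) (count_below (fun y => ~~ P y) x).

Lemma rank_matchP {P Q} :
  same_size P Q -> same_size (fun y => ~~ P y) (fun y => ~~ Q y) ->
  forall x, Q (rank_match P Q x) = P x /\
    if P x then count_below Q (rank_match P Q x) = count_below P x
    else count_below (fun y => ~~ Q y) (rank_match P Q x) =
         count_below (fun y => ~~ P y) x.
Proof.
move=> PQ nPQ x; rewrite /rank_match; case: ifP => Px.
  by have [-> ->] := elem_of_rankP ((PQ _).1 (at_least_rank Px)).
have nPx : ~~ P x by rewrite Px.
by have [/negbTE -> ->] := elem_of_rankP ((nPQ _).1 (at_least_rank nPx)).
Qed.

Lemma rank_matchK P Q :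
  same_size P Q -> same_size (fun y => ~~ P y) (fun y => ~~ Q y) ->
  cancel (rank_match P Q) (rank_match Q P).
Proof.
move=> PQ nPQ x.
have [QPx cnt_x] := rank_matchP PQ nPQ x.
have [PQPx cnt_Px] :=
  rank_matchP (same_size_sym PQ) (same_size_sym nPQ) (rank_match P Q x).
rewrite QPx in PQPx cnt_Px; case: (boolP (P x)) => Px.
  rewrite Px in cnt_x cnt_Px PQPx.
  by apply: (count_below_inj PQPx Px); rewrite cnt_Px.
rewrite (negbTE Px) in cnt_x cnt_Px PQPx.
by apply: (count_below_inj (R := fun y => ~~ P y)); rewrite /= ?PQPx ?cnt_Px.
Qed.

Definition sig2 : signature := [:: 1].

Lemma size_sig2_tuple (i : 'I_(size sig2)) (t : (nth 0 sig2 i).-tuple nat) : size t = 1.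
Proof. by rewrite size_tuple; clear t; case: i => [[|]]. Qed.

Definition unary (P : nat -> bool) : structure sig2 := fun i t => P (nth 0 t 0).

Definition marked (S : structure sig2) x := S (@Ordinal 1 0 isT) [tuple x].

Lemma iso_unary P Q :
  same_size P Q -> same_size (fun y => ~~ P y) (fun y => ~~ Q y) ->
  iso (unary P) (unary Q).
Proof.
move=> PQ nPQ; exists (rank_match P Q), (rank_match Q P).
split; first exact: rank_matchK.
split; first exact: rank_matchK (same_size_sym PQ) (same_size_sym nPQ).
move=> i t; rewrite /unary /= (nth_map 0) ?size_sig2_tuple //.
by case: (rank_matchP PQ nPQ (nth 0 t 0)).
Qed.

Lemma agree_below_unary m (P Q : nat -> bool) :
  (forall x, x < m -> P x = Q x) -> agree_below m (unary P) (unary Q).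
Proof.
move=> PQ i t /allP t_lt; apply/PQ/t_lt/mem_nth.
by rewrite size_sig2_tuple.
Qed.

Lemma iso_same_size {S S'} : iso S S' -> same_size (marked S) (marked S').
Proof.
case=> f [g [fK [gK SS']]].
have Sf x : marked S x = marked S' (f x).
  by rewrite /marked SS'; congr (S' _ _); apply: val_inj.
move=> j; split; first exact: at_least_inj (can_inj fK) Sf j.
by apply: at_least_inj (can_inj gK) _ j => y; rewrite Sf gK.
Qed.

Lemma at_least_lt n j : at_least (fun x => x < n) j <-> j <= n.
Proof.
rewrite (at_least_bounded _ n) // /count_below.
by rewrite (@eq_in_count _ _ predT) ?count_predT ?size_iota // => x; rewrite mem_iota.
Qed.

Lemma at_least_odd j : at_least odd j.
Proof.
by apply: at_least_infinite => N; exists N.*2.+1; rewrite /= ?odd_double //; lia.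
Qed.

Lemma at_least_even j : at_least (fun x => ~~ odd x) j.
Proof. by apply: at_least_infinite => N; exists N.*2; rewrite ?odd_double //; lia. Qed.

Lemma at_least_ge n j : at_least (fun x => ~~ (x < n)) j.
Proof. by apply: at_least_infinite => N; exists (maxn N n); rewrite -?leqNgt; lia. Qed.

(* The paper uses the graphs R_n + I and R + I; unary structures with n marked
   points and with infinitely many marked and unmarked points behave alike. *)
Definition U n := unary (fun x => x < n).
Definition Uw := unary odd.
Definition K2 (A : structure sig2) := (exists n, A = U n) \/ A = Uw.

Lemma K2_eq {A B} : K2 A -> K2 B -> same_size (marked A) (marked B) -> A = B.
Proof.
move=> [[n ->]|->] [[m ->]|->] AB //.
- have /at_least_lt le_nm := (AB n).1 ((at_least_lt n n).2 (leqnn n)).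
  have /at_least_lt le_mn := (AB m).2 ((at_least_lt m m).2 (leqnn m)).
  by congr U; lia.
- by have /at_least_lt := (AB n.+1).2 (at_least_odd _); rewrite ltnn.
- by have /at_least_lt := (AB m.+1).1 (at_least_odd _); rewrite ltnn.
Qed.

Lemma K2_family : is_family K2.
Proof.
split.
  exists (fun n => if n is n'.+1 then U n' else Uw).
  by move=> A [[n ->]|->]; [exists n.+1 | exists 0].
by move=> A B KA KB /iso_same_size; apply: K2_eq.
Qed.

Lemma K2_Erange_learnable : learnable Erange K2.
Proof.
apply: (learnable_of_iso_invariant (Gamma := fun S => count_below (marked S))
  Erange_sym Erange_trans).
- move=> S _ n; exists n => S' _ SS' k lt_kn; apply: eq_in_count => x.
  by rewrite mem_iota => lt_xk; apply: SS'; rewrite /= andbT; lia.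
- by move=> S A _ /iso_same_size SA x; rewrite !range_count_below.
by move=> A B KA KB AB; apply: K2_eq => // j; rewrite -!range_count_below.
Qed.

Lemma LD_Uw : LD K2 Uw.
Proof. by exists Uw; split; [right | exact: iso_refl]. Qed.

Definition finU (s : seq bool) := unary (nth false s).

Lemma nth_false_lt s x : nth false s x -> x < size s.
Proof. by apply: contraTT; rewrite -leqNgt => le_sx; rewrite nth_default. Qed.

Lemma LD_finU s : LD K2 (finU s).
Proof.
have count_s : count_below (nth false s) (size s) = count id s.
  by rewrite /count_below -[in RHS](mkseq_nth false s) /mkseq count_map.
exists (U (count id s)); split; first by left; exists (count id s).
apply: iso_unary => j.
  by rewrite at_least_lt (at_least_bounded _ _ _ (@nth_false_lt s)) count_s.
split=> _; first exact: at_least_ge.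
apply: at_least_infinite => N; exists (maxn N (size s)); first exact: leq_maxl.
by rewrite nth_default ?leq_maxr.
Qed.

Lemma finU_not_iso_Uw s : ~ iso (finU s) Uw.
Proof.
move=> /iso_same_size /(_ (size s).+1) [_ /(_ (at_least_odd _))].
change (at_least (nth false s) (size s).+1 -> False).
rewrite (at_least_bounded _ _ _ (@nth_false_lt s)) => /leq_trans/(_ (count_size _ _)).
by rewrite size_iota ltnn.
Qed.

(* Each padding adds an unmarked and a marked point, so that the limit of the
   padded patterns has infinitely many of both and is a copy of Uw. *)
Definition pad (s : seq bool) L := s ++ nseq L.+1 false ++ [:: true].

Lemma size_pad s L : size (pad s L) = size s + L.+2.
Proof. by rewrite /pad !size_cat size_nseq /=; lia. Qed.

Lemma agree_below_pad s L : agree_below L (finU s) (finU (pad s L)).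
Proof.
apply: agree_below_unary => x lt_xL; rewrite /pad nth_cat.
case: ltnP => // le_sx; rewrite nth_default // nth_cat size_nseq.
by rewrite ifT ?nth_nseq ?if_same //; lia.
Qed.

Lemma nth_pad_size s L : nth false (pad s L) (size s) = false.
Proof. by rewrite /pad nth_cat ltnn subnn. Qed.

Lemma nth_pad_last s L : nth false (pad s L) (size s + L.+1) = true.
Proof. by rewrite /pad nth_cat ltnNge leq_addr addKn nth_cat size_nseq ltnn subnn. Qed.

Section Diagonalization.

Variable Gamma : structure sig2 -> nat -> nat.
Hypothesis Gamma_cont : continuous_on_LD K2 Gamma.
Hypothesis Gamma_learns :
  forall S S', LD K2 S -> LD K2 S' -> iso S S' <-> E0 (Gamma S) (Gamma S').

Definition defeats s L := exists2 n, size s <= n &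
  forall S, LD K2 S -> agree_below (size (pad s L)) (finU (pad s L)) S ->
    Gamma S n <> Gamma Uw n.

Lemma exists_defeating_pad s : exists L, defeats s L.
Proof.
have [n le_sn Gn] : exists2 n, size s <= n & Gamma (finU s) n <> Gamma Uw n.
  apply: not_E0_often => /(Gamma_learns _ _ (LD_finU s) LD_Uw).
  exact: finU_not_iso_Uw.
have [L GL] := Gamma_cont _ (LD_finU s) n.+1.
exists L, n => // S KS padS; rewrite -(GL S KS _ n (ltnSn n)) //.
apply: agree_below_trans (agree_below_pad s L) (agree_below_le _ padS).
by rewrite size_pad; lia.
Qed.

Definition pad_length s := epsilon (inhabits 0) (defeats s).

Lemma pad_length_defeats s : defeats s (pad_length s).
Proof. exact: epsilon_spec (exists_defeating_pad s). Qed.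

Fixpoint stage k := if k is k'.+1 then pad (stage k') (pad_length (stage k')) else [::].

Lemma prefix_stage k j : k <= j -> prefix (stage k) (stage j).
Proof.
move/subnK <-; elim: (j - k) => [|d IH]; first exact: prefix_refl.
by apply: (prefix_trans IH); rewrite addSn /= prefix_prefix.
Qed.

Lemma nth_stage {k j x} :
  k <= j -> x < size (stage k) -> nth false (stage j) x = nth false (stage k) x.
Proof. by move/prefix_stage/prefixP => [r ->] lt_x; rewrite nth_cat lt_x. Qed.

Lemma leq_size_stage k : k <= size (stage k).
Proof. by elim: k => //= k IH; rewrite size_pad; lia. Qed.

Definition diagonal := unary (fun x => nth false (stage x.+1) x).

Lemma nth_diagonal k x : x < size (stage k) ->
  nth false (stage x.+1) x = nth false (stage k) x.
Proof.
move=> lt_x; rewrite -(nth_stage (leq_maxl k x.+1) lt_x).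
by rewrite (nth_stage (leq_maxr k x.+1)) // (leq_trans _ (leq_size_stage _)).
Qed.

Lemma agree_below_stage_diagonal k :
  agree_below (size (stage k)) (finU (stage k)) diagonal.
Proof. by apply: agree_below_unary => x /nth_diagonal. Qed.

Lemma diagonal_iso_Uw : iso diagonal Uw.
Proof.
apply: iso_unary => j; split=> _.
- exact: at_least_odd.
- apply: at_least_infinite => N; set L := pad_length (stage N).
  exists (size (stage N) + L.+1); first by have := leq_size_stage N; lia.
  by rewrite (nth_diagonal N.+1) /= ?nth_pad_last // size_pad; lia.
- exact: at_least_even.
- apply: at_least_infinite => N; exists (size (stage N)); first exact: leq_size_stage.
  by rewrite (nth_diagonal N.+1) /= ?nth_pad_size // size_pad; lia.
Qed.

Lemma not_E0_learner : False.
Proof.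
have KD : LD K2 diagonal := LD_iso LD_Uw diagonal_iso_Uw.
have [m Gm] := (Gamma_learns _ _ KD LD_Uw).1 diagonal_iso_Uw.
have [n le_n Gn] := pad_length_defeats (stage m).
apply: (Gn diagonal KD (agree_below_stage_diagonal m.+1)).
by apply: Gm; have := leq_size_stage m; lia.
Qed.

End Diagonalization.

Lemma K2_not_E0_learnable : ~ learnable E0 K2.
Proof. by case=> Gamma [Gcont Glearn]; apply: not_E0_learner Gcont Glearn. Qed.

Theorem mainTheorem8 :
  (exists (sig : signature) (K : structure sig -> Prop),
      is_family K /\ learnable E0 K /\ ~ learnable Erange K) /\
  (exists (sig : signature) (K : structure sig -> Prop),
      is_family K /\ learnable Erange K /\ ~ learnable E0 K).
Proof.
split.
  exists sig1, K1; split; first exact: K1_family.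
  by split; [exact: K1_E0_learnable | exact: K1_not_Erange_learnable].
exists sig2, K2; split; first exact: K2_family.
by split; [exact: K2_Erange_learnable | exact: K2_not_E0_learnable].
Qed.
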